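(* Assume $\bar\Phi_p=0$, $\Phi_p^\top\Phi_p=\mathrm{diag}(\sigma_1^2,\dots,\sigma_d^2)$ with all $\sigma_j^2>0$, and $\delta>0$. Let $\hat w^\delta_{\ell_\infty}$ be the $\ell_\infty$ balancing weights, $\tfrac1n\hat w^\delta_{\ell_\infty}=\mathcal T_\delta(\bar\Phi_q-\bar\Phi_p)(\Phi_p^\top\Phi_p)^{-1}\Phi_p^\top$. Then for every $\hat\beta_{\mathrm{reg}}\in\mathbb{R}^d$, $$\bar\Phi_q\hat\beta_{\mathrm{reg}}+\tfrac1n\hat w^\delta_{\ell_\infty}(Y_p-\Phi_p\hat\beta_{\mathrm{reg}})=\bar\Phi_q\hat\beta_{\ell_\infty},$$ where, with $\Delta_j:=\bar\Phi_{q,j}-\bar\Phi_{p,j}$, $$\hat\beta_{\ell_\infty,j}=\begin{cases}\hat\beta_{\mathrm{reg},j}&\text{if }|\Delta_j|<\delta,\\[2pt] \left|\frac{\delta}{\Delta_j}\right|\hat\beta_{\mathrm{reg},j}+\left(1-\left|\frac{\delta}{\Delta_j}\right|\right)\hat\beta_{\mathrm{ols},j}&\text{otherwise.}\end{cases}$$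
   Context: $\Phi_p\in\mathbb{R}^{n\times d}$ (source features), $Y_p\in\mathbb{R}^n$, $\Phi_q\in\mathbb{R}^{n\times d}$ (target features), column averages $\bar\Phi_p,\bar\Phi_q\in\mathbb{R}^{1\times d}$. $\hat\beta_{\mathrm{ols}}:=(\Phi_p^\top\Phi_p)^{-1}\Phi_p^\top Y_p$. $\mathcal T_t$ is entrywise soft-thresholding: $\mathcal T_t(z)=0$ if $|z|\le t$, $z-t$ if $z>t$, $z+t$ if $z<-t$. These weights solve $\min\|v\|_2^2$ s.t. $\|v\Phi_p-\bar\Phi_q\|_\infty\le\delta$ over $v=\tfrac1n w$. *)

From HB Require Import structures.
From mathcomp Require Import all_boot all_order all_algebra.
Set Implicit Arguments. Unset Strict Implicit. Unset Printing Implicit Defensive.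
Import Order.TTheory GRing.Theory Num.Theory.
Local Open Scope ring_scope.

Definition colavg (R : realFieldType) (n d : nat) (Phi : 'M[R]_(n, d)) : 'rV[R]_d :=
  (n%:R)^-1 *: (const_mx 1 *m Phi).

Definition soft_thr (R : realFieldType) (t z : R) : R :=
  if `|z| <= t then 0 else if z > t then z - t else z + t.

Definition soft_thr_row (R : realFieldType) (d : nat) (t : R) (z : 'rV[R]_d) : 'rV[R]_d :=
  \row_j soft_thr t (z 0 j).

Definition beta_ols (R : realFieldType) (n d : nat) (Phip : 'M[R]_(n, d))
  (Yp : 'cV[R]_n) : 'cV[R]_d :=
  invmx (Phip^T *m Phip) *m Phip^T *m Yp.

(* the l_infty balancing weights w (so that (1/n) w = T_delta(...) (Phi_p^T Phi_p)^{-1} Phi_p^T) *)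
Definition w_linf (R : realFieldType) (n d : nat) (delta : R)
  (Phip Phiq : 'M[R]_(n, d)) : 'rV[R]_n :=
  n%:R *: (soft_thr_row delta (colavg Phiq - colavg Phip)
           *m invmx (Phip^T *m Phip) *m Phip^T).

Definition beta_linf (R : realFieldType) (n d : nat) (delta : R)
  (Phip Phiq : 'M[R]_(n, d)) (Yp : 'cV[R]_n) (breg : 'cV[R]_d) : 'cV[R]_d :=
  let Delta := colavg Phiq - colavg Phip in
  let bols := beta_ols Phip Yp in
  \col_j (if `|Delta 0 j| < delta then breg j 0
          else `|delta / Delta 0 j| * breg j 0
               + (1 - `|delta / Delta 0 j|) * bols j 0).

(* With centred source features the balancing weights are
   (1/n) w = T_delta(Phi_q-bar) G^{-1} Phi_p^T, where G = Phi_p^T Phi_p.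
   Applied to the residual Y_p - Phi_p b they give
   G^{-1} Phi_p^T (Y_p - Phi_p b) = beta_ols - b, so the augmented estimate
   equals  q b + T_delta(q) (beta_ols - b)  with q = Phi_q-bar.  This is a sum
   of coordinatewise terms, and the theorem reduces to a scalar identity:
   soft-thresholding is the shrinkage  T_delta(q) = (1 - |delta/q|) q  when
   |q| >= delta and vanishes otherwise, hence
   q b + T_delta(q) (o - b) = q (|delta/q| b + (1 - |delta/q|) o). *)
From HB Require Import structures.
From mathcomp Require Import all_boot all_order all_algebra ring.
Import Order.TTheory GRing.Theory Num.Theory.
Local Open Scope ring_scope.

Section SoftThreshold.
Variables (R : realFieldType) (delta : R).
Hypothesis delta_gt0 : 0 < delta.

Lemma soft_thr_small (q : R) : `|q| <= delta -> soft_thr delta q = 0.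
Proof. by rewrite /soft_thr => ->. Qed.

Lemma soft_thr_shrink (q : R) :
  delta <= `|q| -> soft_thr delta q = (1 - `|delta / q|) * q.
Proof.
move=> hq; have q_neq0 : q != 0 by rewrite -normr_gt0 (lt_le_trans delta_gt0).
have [hq_eq | hq_gt] := eqVneq `|q| delta.
  by rewrite soft_thr_small ?hq_eq // normf_div hq_eq (gtr0_norm delta_gt0)
             divff ?gt_eqF // subrr mul0r.
have hlt : delta < `|q| by rewrite lt_neqAle eq_sym hq_gt.
rewrite /soft_thr leNgt hlt /= normf_div (gtr0_norm delta_gt0).
have [q_gt0 | q_lt0] := ltP 0 q.
  rewrite (gtr0_norm q_gt0) in hlt *; rewrite hlt; field.
  by rewrite gt_eqF.
rewrite (ler0_norm q_lt0) in hlt *.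
rewrite ltNge (le_trans q_lt0 (ltW delta_gt0)) /=.
by field.
Qed.

Lemma soft_thr_augment (q b o : R) :
  q * b + soft_thr delta q * (o - b) =
  q * (if `|q| < delta then b else `|delta / q| * b + (1 - `|delta / q|) * o).
Proof.
have [hq | hq] := ltP `|q| delta.
  by rewrite soft_thr_small ?(ltW hq) // mul0r addr0.
rewrite soft_thr_shrink //; ring.
Qed.

Lemma soft_thr_row_augment (d : nat) (q : 'rV[R]_d) (b o : 'cV[R]_d) :
  q *m b + soft_thr_row delta q *m (o - b) =
  q *m \col_j (if `|q 0 j| < delta then b j 0
               else `|delta / q 0 j| * b j 0 + (1 - `|delta / q 0 j|) * o j 0).
Proof.
apply/rowP => i; rewrite !mxE -big_split /=; apply: eq_bigr => j _.
by rewrite !mxE ord1 soft_thr_augment.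
Qed.

End SoftThreshold.

Lemma diag_mx_pos_unit (R : realFieldType) (d : nat) (s : 'rV[R]_d) :
  (forall j, 0 < s 0 j) -> diag_mx s \in unitmx.
Proof.
move=> s_gt0; rewrite unitmxE det_diag unitfE.
by apply/prodf_neq0 => j _; rewrite gt_eqF.
Qed.

Lemma ols_residual (R : realFieldType) (n d : nat) (Phi : 'M[R]_(n, d))
    (Y : 'cV[R]_n) (b : 'cV[R]_d) :
  Phi^T *m Phi \in unitmx ->
  invmx (Phi^T *m Phi) *m Phi^T *m (Y - Phi *m b) = beta_ols Phi Y - b.
Proof.
move=> G_unit; rewrite mulmxBr /beta_ols mulmxA.
by rewrite -(mulmxA (invmx _) _ Phi) mulVmx // mul1mx.
Qed.

Lemma w_linf_normalized (R : realFieldType) (n d : nat) (delta : R)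
    (Phip Phiq : 'M[R]_(n.+1, d)) :
  (n.+1%:R)^-1 *: w_linf delta Phip Phiq =
  soft_thr_row delta (colavg Phiq - colavg Phip)
    *m invmx (Phip^T *m Phip) *m Phip^T.
Proof. by rewrite /w_linf scalerA mulVf ?pnatr_eq0 // scale1r. Qed.

Theorem mainTheorem7 (R : realFieldType) (n d : nat)
  (Phip Phiq : 'M[R]_(n, d)) (Yp : 'cV[R]_n) (delta : R) (sigma2 : 'rV[R]_d)
  (hbarp : colavg Phip = 0)
  (hdiag : Phip^T *m Phip = diag_mx sigma2)
  (hpos : forall j, 0 < sigma2 0 j)
  (hdelta : 0 < delta) :
  forall breg : 'cV[R]_d,
    colavg Phiq *m breg
      + (n%:R)^-1 *: (w_linf delta Phip Phiq *m (Yp - Phip *m breg))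
    = colavg Phiq *m beta_linf delta Phip Phiq Yp breg.
Proof.
move=> breg.
have G_unit : Phip^T *m Phip \in unitmx by rewrite hdiag diag_mx_pos_unit.
(* An empty sample makes every average, hence both sides, vanish. *)
case: n Phip Phiq Yp hbarp hdiag G_unit => [|n] Phip Phiq Yp hbarp _ G_unit.
  have -> : colavg Phiq = 0 by rewrite /colavg invr0 scale0r.
  by rewrite invr0 scale0r !mul0mx addr0.
have shift_eq : colavg Phiq - colavg Phip = colavg Phiq by rewrite hbarp subr0.
rewrite scalemxAl w_linf_normalized shift_eq.
rewrite -(mulmxA (soft_thr_row _ _)) -mulmxA ols_residual //.
by rewrite /beta_linf shift_eq soft_thr_row_augment.
Qed.
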